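(* With the notation in the context, the following identity of linear endomorphisms of $\mathbb C^{\mathcal L(\Omega)}$ holds: $(q^2-1)\big(L_2(x_0)R_2(x_0)-R_2(x_0)L_2(x_0)\big)=(q^2-1)D_3(x_0)+D_4(x_0)-q^DD_1(x_0)^{-1}D_2(x_0)^{-1}$.
   Context: $\Omega$ is a $D$-dimensional vector space over a finite field $\mathbb F$ and $q=\sqrt{|\mathbb F|}$. $\mathcal L(\Omega)$ is the set of subspaces of $\Omega$ and $\mathbb C^{\mathcal L(\Omega)}$ the complex vector space with basis $\mathcal L(\Omega)$; $x'\subset\mathrel{\cdot} x$ means $x'\subseteq x$ with $\dim x'=\dim x-1$; $|y|$ denotes the cardinality of a subspace $y$ (so $|y|=q^{2\dim y}$). Fix subspaces $x_0,x_1$ with $\Omega=x_0\oplus x_1$; for $u\in\Omega$ write $u=u_0+u_1$ with $u_0\in x_0$, $u_1\in x_1$. For $x\in\mathcal L(\Omega)$ let $\tau(x):(x+x_0)/x_0\to x_0/(x\cap x_0)$ be the linear map $u+x_0\mapsto u_0+(x\cap x_0)$ ($u\in x$). Linear maps on $\mathbb C^{\mathcal L(\Omega)}$ are defined on the basis by: $L_1(x_0)x=\sum x'$ over $x'\subset\mathrel{\cdot} x$ with $x'\cap x_0=x\cap x_0$; $L_2(x_0)x=\sum x'$ over $x'\subset\mathrel{\cdot} x$ with $x'+x_0=x+x_0$; $R_1(x_0)x=\sum x'$ over $x\subset\mathrel{\cdot} x'$ with $x'\cap x_0=x\cap x_0$; $R_2(x_0)x=\sum x'$ over $x\subset\mathrel{\cdot}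 x'$ with $x'+x_0=x+x_0$; $D_1(x_0)x=q^{\dim(\Omega/x_0)-2\dim((x+x_0)/x_0)}x$; $D_2(x_0)x=q^{\dim x_0-2\dim(x\cap x_0)}x$; $D_3(x_0)x=\sum x'$ over $x'\in\mathcal L(\Omega)$ with $x'+x_0=x+x_0$, $x'\cap x_0=x\cap x_0$ and $\operatorname{rank}(\tau(x')-\tau(x))=1$; $D_4(x_0)x=\big(\frac{|x|+|x_0|}{|x\cap x_0|}-1\big)x$. *)

From HB Require Import structures.
From mathcomp Require Import all_boot all_order all_algebra all_field.
Set Implicit Arguments. Unset Strict Implicit. Unset Printing Implicit Defensive.
Import Order.TTheory GRing.Theory Num.Theory.
Local Open Scope ring_scope.

(* Omega is modelled as 'rV[F]_D (any D-dimensional F-space is isomorphic). *)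
Import VectorInternalTheory.
HB.instance Definition _ (F : finFieldType) (D : nat) :=
  [Finite of space ('rV[F]_D) by <:].

Notation CL F D := {ffun {vspace 'rV[F]_D} -> algC^o}.

Section Defs.
Variables (F : finFieldType) (D : nat).
Local Notation V := 'rV[F]_D.
Local Notation LS := {vspace V}.

Definition qF : algC := sqrtC (#|F|%:R).

Local Notation CL := {ffun LS -> algC^o}.

Definition bvec (x : LS) : CL := [ffun y => (y == x)%:R].

Definition bsum (P : pred LS) : CL := [ffun y => (P y)%:R].

Definition linext (T : LS -> CL) (f : CL) : CL := \sum_(x : LS) f x *: T x.

Definition covby (x' x : LS) : bool := (x' <= x)%VS && (\dim x' + 1 == \dim x)%N.

Definition cardv (y : LS) : algC := qF ^+ (2 * \dim y).

Definition comp0 (x0 x1 : LS) (u : V) : V := daddv_pi x0 x1 u.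

(* rank of tau(x') - tau(x), where tau(y) : (y+x0)/x0 -> x0/(y :&: x0),
   u + x0 |-> u_0 + (y :&: x0) (u in y). For x, x' with the same
   x + x0 and x :&: x0 the difference maps the class w = u + x0 = u' + x0
   (u in x, u' in x') to u'_0 - u_0 + (x :&: x0); its rank is the dimension
   of its image in x0/(x :&: x0). *)
Definition tau_diff_img (x0 x1 x x' : LS) : LS :=
  (\sum_(u : V | u \in x) \sum_(u' : V | (u' \in x') && (u' - u \in x0))
      <[comp0 x0 x1 u' - comp0 x0 x1 u]>)%VS.
Definition rank_tau_diff (x0 x1 x x' : LS) : nat :=
  (\dim (tau_diff_img x0 x1 x x' + (x :&: x0)) - \dim (x :&: x0))%N.

Variables (x0 x1 : LS).

Definition L1 : CL -> CL := linext (fun x =>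
  bsum (fun x' => covby x' x && (x' :&: x0 == x :&: x0)%VS)).
Definition L2 : CL -> CL := linext (fun x =>
  bsum (fun x' => covby x' x && (x' + x0 == x + x0)%VS)).
Definition R1 : CL -> CL := linext (fun x =>
  bsum (fun x' => covby x x' && (x' :&: x0 == x :&: x0)%VS)).
Definition R2 : CL -> CL := linext (fun x =>
  bsum (fun x' => covby x x' && (x' + x0 == x + x0)%VS)).

Definition e1 (x : LS) : int :=
  (D - \dim x0)%:Z - 2 * (\dim (x + x0) - \dim x0)%:Z.
Definition e2 (x : LS) : int := (\dim x0)%:Z - 2 * (\dim (x :&: x0))%:Z.

Definition D1 : CL -> CL := linext (fun x => qF ^ e1 x *: bvec x).
Definition D2 : CL -> CL := linext (fun x => qF ^ e2 x *: bvec x).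
Definition D1inv : CL -> CL := linext (fun x => (qF ^ e1 x)^-1 *: bvec x).
Definition D2inv : CL -> CL := linext (fun x => (qF ^ e2 x)^-1 *: bvec x).

Definition D3 : CL -> CL := linext (fun x =>
  bsum (fun x' => [&& (x' + x0 == x + x0)%VS, (x' :&: x0 == x :&: x0)%VS
                    & rank_tau_diff x0 x1 x x' == 1%N])).
Definition D4 : CL -> CL := linext (fun x =>
  ((cardv x + cardv x0) / cardv (x :&: x0) - 1) *: bvec x).

End Defs.

From HB Require Import structures.
From mathcomp Require Import all_boot all_order all_algebra all_field.
From mathcomp Require Import zify ring.
Set Implicit Arguments. Unset Strict Implicit. Unset Printing Implicit Defensive.
Import GRing.Theory Num.Theory.
Local Open Scope ring_scope.

(* Both L2 R2 and R2 L2 act by nonnegative integer matrices: the (y, x) entry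
   counts the z with x ⋖ z ⋗ y, resp. x ⋗ z ⋖ y, all covering relations
   preserving the image in Omega/x0.  For x <> y the only candidates are
   z = x + y and z = x :&: y.  Both occur when x, y are adjacent with
   x + x0 = y + x0, except that x :&: y + x0 drops below x + x0 exactly when
   x :&: x0 <= y; as the image of tau(y) - tau(x) is ((x + y) :&: x0)/(x :&: x0),
   this is the condition rank (tau(y) - tau(x)) = 1 defining D3.  On the
   diagonal the entries are numbers of covers in intervals of the subspace
   lattice, i.e. q^2-integers; hyperplanes of x through a given subspace are
   counted by passing to orthogonal complements.  The diagonal identity is
   then an equation between powers of q. *)

Lemma card_F_gt0 (F : finFieldType) : (0 < #|F|)%N.
Proof. by apply/card_gt0P; exists 0. Qed.

Section HyperplaneCount.
Variables (F : finFieldType) (D : nat).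
Local Notation V := 'rV[F]_D.
Local Notation LS := {vspace V}.

Lemma card_setD_vspace (U W : LS) : (U <= W)%VS ->
  #|[set v | (v \in W) && (v \notin U)]| = (#|F| ^ \dim W - #|F| ^ \dim U)%N.
Proof.
move=> sUW; rewrite -!card_vspace -(cardID (mem U) (mem W)).
have -> : #|[predI mem W & mem U]| = #|U|.
  by apply: eq_card => v; rewrite !inE andb_idl // => /(subvP sUW).
by rewrite addKn; apply: eq_card => v; rewrite !inE andbC.
Qed.

Lemma dimv_add_line (U : LS) v : v \notin U -> \dim (U + <[v]>) = (\dim U).+1.
Proof.
move=> vU; rewrite dimv_disjoint_sum ?dim_vline; last first.
  apply/eqP; rewrite -subv0; apply/subvP => w /memv_capP[wU /vlineP[k wk]].
  rewrite memv0 wk scaler_eq0; apply/orP; left; apply: contraNT vU => k0.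
  by rewrite -(scalerK k0 v) -wk; exact: memvZ.
suff -> : v != 0 by rewrite addn1.
by apply: contraNneq vU => ->; rewrite mem0v.
Qed.

Lemma card_covby_sub (U W : LS) : (U <= W)%VS ->
  (#|[set z : LS | covby U z && (z <= W)%VS]| * (#|F| - 1)
   = #|F| ^ (\dim W - \dim U) - 1)%N.
Proof.
move=> sUW; have pU_gt0 : (0 < #|F| ^ \dim U)%N by rewrite expn_gt0 card_F_gt0.
apply/eqP; rewrite -(eqn_pmul2l pU_gt0); apply/eqP.
rewrite mulnCA [in RHS]mulnBr muln1 -expnD subnKC ?dimvS //.
rewrite -card_setD_vspace // -[in RHS]sum1_card.
(* Each such z is U + <[v]> for exactly the vectors v of z outside U. *)
rewrite (partition_big (fun v => (U + <[v]>)%VS)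
           (fun z => covby U z && (z <= W)%VS)) /=; last first.
  move=> v; rewrite inE => /andP[vW vU].
  by rewrite /covby addvSl dimv_add_line // addn1 eqxx subv_add sUW -memvE.
rewrite -sum_nat_const; apply: eq_big => [z|z]; first by rewrite inE.
rewrite inE => /andP[/andP[sUz /eqP dz] szW].
have -> : (#|F| ^ \dim U * (#|F| - 1) = #|F| ^ \dim z - #|F| ^ \dim U)%N.
  by rewrite -dz addn1 expnS mulnBr muln1 mulnC.
rewrite sum1dep_card -card_setD_vspace //; apply: eq_card => v; rewrite !inE.
apply/andP/andP => [[vz vU]|[/andP[vW vU] /eqP <-]]; last first.
  by rewrite vU memvE addvSr.
split; first by rewrite vU (subvP szW).
by rewrite eqEdim subv_add sUz -memvE vz dimv_add_line // -dz addn1 leqnn.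
Qed.

End HyperplaneCount.

Section Orthogonal.
Variables (F : finFieldType) (D : nat).
Local Notation V := 'rV[F]_D.
Local Notation LS := {vspace V}.

Definition dotv (u v : V) : F := \sum_j u 0 j * v 0 j.

Definition basis_mx (S : LS) : 'M[F]_(D, \dim S) := \matrix_(j, i) (vbasis S)`_i 0 j.

Definition perpv (S : LS) : LS := lker (linfun (mulmxr (basis_mx S))).

Lemma dotvC u v : dotv u v = dotv v u.
Proof. by apply: eq_bigr => j _; rewrite mulrC. Qed.

Lemma dotvDr u v w : dotv u (v + w) = dotv u v + dotv u w.
Proof. by rewrite /dotv -big_split; apply: eq_bigr => j _; rewrite mxE mulrDr. Qed.

Lemma dotv_sumr u n (c : 'I_n -> F) (b : 'I_n -> V) :
  dotv u (\sum_i c i *: b i) = \sum_i c i * dotv u (b i).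
Proof.
rewrite /dotv; under eq_bigr do rewrite summxE mulr_sumr.
rewrite exchange_big; apply: eq_bigr => i _; rewrite mulr_sumr.
by apply: eq_bigr => j _; rewrite mxE mulrCA.
Qed.

Lemma basis_mxE (S : LS) v i : (v *m basis_mx S) 0 i = dotv v (vbasis S)`_i.
Proof. by rewrite mxE; apply: eq_bigr => j _; rewrite mxE. Qed.

Lemma perpvP (S : LS) v :
  reflect (forall s, s \in S -> dotv v s = 0) (v \in perpv S).
Proof.
rewrite memv_ker lfunE /=; apply: (iffP eqP) => [vS0 s sS | vS0].
  rewrite (coord_vbasis sS) dotv_sumr big1 // => i _.
  by rewrite -basis_mxE vS0 mxE mulr0.
apply/rowP => i; rewrite basis_mxE mxE vS0 //.
by apply/vbasis_mem/mem_nth; rewrite size_tuple.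
Qed.

Lemma perpv_full : perpv fullv = 0%VS.
Proof.
apply/eqP; rewrite -subv0; apply/subvP => v /perpvP v_perp; rewrite memv0.
apply/eqP/rowP => j; have := v_perp (delta_mx 0 j) (memvf _).
rewrite /dotv (bigD1 j) //= big1 => [|k kj]; last by rewrite mxE (negbTE kj) andbF mulr0.
by rewrite !mxE !eqxx mulr1 addr0.
Qed.

Lemma dimv_full : \dim (fullv : LS) = D.
Proof. by rewrite dimvf dim_matrix mul1r. Qed.

Lemma dimv_leD (S : LS) : (\dim S <= D)%N.
Proof. by have := dimvS (subvf S); rewrite dimv_full. Qed.

Lemma dim_perpv (S : LS) : \dim (perpv S) = (D - \dim S)%N.
Proof.
have perp_ge (T : LS) : (D <= \dim (perpv T) + \dim T)%N.
  have := limg_ker_dim (linfun (mulmxr (basis_mx T))) (fullv : LS).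
  rewrite capfv dimv_full /perpv => dimD; rewrite -[X in (X <= _)%N]dimD leq_add2l.
  have := dimvS (@subvf _ 'rV[F]_(\dim T) (limg (linfun (mulmxr (basis_mx T))))).
  by rewrite dimvf dim_matrix mul1r.
have perp_cap : (perpv S :&: perpv S^C%VS = 0)%VS.
  apply/eqP; rewrite -subv0 -perpv_full.
  apply/subvP => v /memv_capP[/perpvP vS /perpvP vSC]; apply/perpvP => s _.
  have : s \in (S + S^C)%VS by rewrite addv_complf memvf.
  by case/memv_addP => a aS [b bC ->]; rewrite dotvDr vS // vSC // addr0.
have := dimv_disjoint_sum perp_cap; have := dimv_leD (perpv S + perpv S^C%VS).
have := perp_ge S; have := perp_ge S^C%VS; have := dimv_leD S.
rewrite dimv_compl dimv_full; lia.
Qed.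

Lemma perpvK : cancel perpv perpv.
Proof.
move=> S; apply/eqP; rewrite eq_sym eqEdim !dim_perpv subKn ?dimv_leD // leqnn andbT.
by apply/subvP => s sS; apply/perpvP => v /perpvP v_perp; rewrite dotvC v_perp.
Qed.

Lemma perpv_sub (S T : LS) : (perpv T <= perpv S)%VS = (S <= T)%VS.
Proof.
suff perpvS (U W : LS) : (U <= W)%VS -> (perpv W <= perpv U)%VS.
  by apply/idP/idP => [/perpvS|/perpvS //]; rewrite !perpvK.
move=> sUW; apply/subvP => v /perpvP v_perp; apply/perpvP => s sS.
by rewrite v_perp // (subvP sUW).
Qed.

Lemma covby_perpv (z x : LS) : covby (perpv x) (perpv z) = covby z x.
Proof.
rewrite /covby perpv_sub !dim_perpv; congr (_ && _).
by have := dimv_leD z; have := dimv_leD x; move=> hx hz; apply/eqP/eqP; lia.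
Qed.

Lemma card_covby_sup (c x : LS) : (c <= x)%VS ->
  (#|[set z : LS | covby z x && (c <= z)%VS]| * (#|F| - 1)
   = #|F| ^ (\dim x - \dim c) - 1)%N.
Proof.
move=> scx; rewrite -(card_imset _ (can_inj perpvK)) (can2_imset_pre _ perpvK perpvK).
have -> : (\dim x - \dim c = \dim (perpv c) - \dim (perpv x))%N.
  by rewrite !dim_perpv; have := dimv_leD x; have := dimvS scx; lia.
rewrite -card_covby_sub ?perpv_sub //; congr (_ * _)%N; apply: eq_card => w.
by rewrite !inE -covby_perpv -perpv_sub !perpvK.
Qed.

End Orthogonal.

Section TauDifference.
Variables (F : finFieldType) (D : nat) (x0 x1 : {vspace 'rV[F]_D}).
Hypothesis x0x1_direct : (x0 :&: x1 = 0)%VS.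

Lemma comp0_subr (u u' : 'rV[F]_D) : u' - u \in x0 ->
  comp0 x0 x1 u' - comp0 x0 x1 u = u' - u.
Proof. by move=> u'u_x0; rewrite /comp0 -linearB /= daddv_pi_id. Qed.

Lemma tau_diff_imgE x y : tau_diff_img x0 x1 x y = ((x + y) :&: x0)%VS.
Proof.
apply/subv_anti/andP; split.
  apply/subv_sumP => u ux; apply/subv_sumP => u' /andP[u'y u'u_x0].
  by rewrite comp0_subr // -memvE memv_cap u'u_x0 addrC memv_add ?rpredN.
apply/subvP => _ /memv_capP[/memv_addP[a ax [b yb ->]] abx0].
have ba_x0 : b - (- a) \in x0 by rewrite opprK addrC.
rewrite memvE (sumv_sup (- a)) ?rpredN // (sumv_sup b) ?yb //.
by rewrite comp0_subr // opprK addrC.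
Qed.

Lemma rank_tau_diffE x y :
  rank_tau_diff x0 x1 x y = (\dim ((x + y) :&: x0) - \dim (x :&: x0))%N.
Proof.
rewrite /rank_tau_diff tau_diff_imgE; congr (\dim _ - _)%N.
by apply/addv_idPl; rewrite capvS ?addvSl.
Qed.

End TauDifference.

Lemma card_set_uniq (T : finType) (P : pred T) w :
  (forall z, P z -> z = w) -> #|[set z | P z]| = P w.
Proof.
move=> P_w; case Pw: (P w).
  apply/eqP/cards1P; exists w; apply/setP => z.
  by rewrite !inE; apply/idP/eqP => [/P_w|->].
apply/eqP; rewrite cards_eq0; apply/eqP/setP => z; rewrite !inE.
by apply: contraFF Pw => Pz; rewrite -(P_w z Pz).
Qed.

Section Adjacency.
Variables (F : finFieldType) (D : nat).
Local Notation LS := {vspace 'rV[F]_D}.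
Implicit Types x y z : LS.

Lemma covby_dimE z x : (z <= x)%VS -> covby z x = (\dim z + 1 == \dim x)%N.
Proof. by rewrite /covby => ->. Qed.

Lemma eqv_dim (U W : LS) : (U <= W)%VS -> (U == W) = (\dim U == \dim W).
Proof. by move=> sUW; rewrite (dimv_leqif_eq sUW). Qed.

Lemma covby_upper_uniq x y z : x != y -> covby x z -> covby y z -> z = (x + y)%VS.
Proof.
move=> neq_xy /andP[sxz /eqP dxz] /andP[syz /eqP dyz].
have sxyz : (x + y <= z)%VS by rewrite subv_add sxz.
apply/eqP; rewrite eq_sym eqv_dim //; apply: contraR neq_xy => ne_dim.
have lt_dim : (\dim (x + y) < \dim z)%N by rewrite ltn_neqAle ne_dim dimvS.
have ex : (x + y)%VS = x.
  by apply/eqP; rewrite eq_sym eqv_dim ?addvSl //; have := dimvS (addvSl x y); lia.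
have ey : (x + y)%VS = y.
  by apply/eqP; rewrite eq_sym eqv_dim ?addvSr //; have := dimvS (addvSr x y); lia.
by rewrite -ex ey.
Qed.

Lemma covby_lower_uniq x y z : x != y -> covby z x -> covby z y -> z = (x :&: y)%VS.
Proof.
move=> neq_xy /andP[szx /eqP dzx] /andP[szy /eqP dzy].
have szxy : (z <= x :&: y)%VS by rewrite subv_cap szx.
apply/eqP; rewrite eqv_dim //; apply: contraR neq_xy => ne_dim.
have lt_dim : (\dim z < \dim (x :&: y))%N by rewrite ltn_neqAle ne_dim dimvS.
have ex : (x :&: y)%VS = x.
  by apply/eqP; rewrite eqv_dim ?capvSl //; have := dimvS (capvSl x y); lia.
have ey : (x :&: y)%VS = y.
  by apply/eqP; rewrite eqv_dim ?capvSr //; have := dimvS (capvSr x y); lia.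
by rewrite -ex ey.
Qed.

Lemma covby_cap_add x y :
  (covby (x :&: y) x && covby (x :&: y) y) = (covby x (x + y) && covby y (x + y)).
Proof.
rewrite !covby_dimE ?capvSl ?capvSr ?addvSl ?addvSr //.
have := dimv_sum_cap x y; do !case: eqP => /=; lia.
Qed.

Variable x0 : LS.

Lemma covby_addv_eq z x : covby z x -> (z + x0 == x + x0)%VS = ~~ (x :&: x0 <= z)%VS.
Proof.
move=> /andP[szx /eqP dzx]; have szx0 : (z + x0 <= x + x0)%VS by rewrite addvS.
have [sxx0_z | nsxx0_z] /= := boolP (x :&: x0 <= z)%VS.
  have zx0E : (z :&: x0 = x :&: x0)%VS.
    by apply/subv_anti; rewrite capvS //= subv_cap sxx0_z capvSr.
  rewrite eqv_dim //; have := dimv_sum_cap z x0; have := dimv_sum_cap x x0.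
  rewrite zx0E; lia.
have zxx0E : (z + x :&: x0 = x)%VS.
  have sub_x : (z + x :&: x0 <= x)%VS by rewrite subv_add szx capvSl.
  apply/eqP; rewrite eqv_dim //; have := dimvS sub_x.
  have := dimv_leqif_sup (addvSl z (x :&: x0)); rewrite subv_add subvv (negbTE nsxx0_z).
  by case=> ? /negbT; rewrite -dzx; lia.
apply/eqP/subv_anti; rewrite szx0 subv_add addvSr -{1}zxx0E addvS ?capvSr //.
Qed.

Definition covby_mod z x := covby z x && (z + x0 == x + x0)%VS.

Definition updown x y := #|[set z | covby_mod x z && covby_mod y z]|.

Definition downup x y := #|[set z | covby_mod z x && covby_mod z y]|.

Lemma addv_modE x y :
  ((x + x0 == x + y + x0) && (y + x0 == x + y + x0))%VS = (y + x0 == x + x0)%VS.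
Proof.
apply/andP/eqP => [[/eqP e1 /eqP e2]|]; first by rewrite e2 e1.
by move=> eW; rewrite -addvA eW addvA addvv eqxx.
Qed.

Lemma updown_offdiag x y : x != y ->
  updown x y = [&& covby x (x + y), covby y (x + y) & (y + x0 == x + x0)%VS].
Proof.
move=> neq_xy; rewrite /updown (@card_set_uniq _ _ (x + y)%VS); last first.
  by move=> z /andP[/andP[xz _] /andP[yz _]]; apply: covby_upper_uniq.
rewrite /covby_mod -(addv_modE x y).
by case: (covby x _); case: (covby y _); rewrite ?andbF.
Qed.

Lemma downup_offdiag x y : x != y -> downup x y =
  [&& covby x (x + y), covby y (x + y), (y + x0 == x + x0)%VS & ~~ (x :&: x0 <= y)%VS].
Proof.
move=> neq_xy; rewrite /downup (@card_set_uniq _ _ (x :&: y)%VS); last first.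
  by move=> z /andP[/andP[zx _] /andP[zy _]]; apply: covby_lower_uniq.
rewrite /covby_mod [in RHS]andbA -covby_cap_add.
case cx: (covby _ x); case cy: (covby _ y); rewrite ?andbF //=.
have := covby_addv_eq cx; rewrite subv_cap capvSl /=.
by case: (_ <= _)%VS => /= [->|/eqP ->]; rewrite ?andbF // eqxx andbT eq_sym.
Qed.

Lemma updown_diag x : updown x x = #|[set z | covby x z && (z <= x + x0)%VS]|.
Proof.
apply: eq_card => z; rewrite !inE /covby_mod andbb.
case cz: (covby x z) => //=; move: cz => /andP[sxz _].
apply/eqP/idP => [-> | szx]; first exact: addvSl.
by apply/subv_anti; rewrite addvS // subv_add szx addvSr.
Qed.

Lemma downup_diag x : (downup x x + #|[set z | covby z x && (x :&: x0 <= z)%VS]|)%N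
  = #|[set z | covby z x]|.
Proof.
rewrite -(cardID [set z | (x :&: x0 <= z)%VS] [set z | covby z x]) addnC.
congr (_ + _)%N; apply: eq_card => z; rewrite !inE //= /covby_mod andbb.
by case cz: (covby z x); rewrite ?andbF // andbT (covby_addv_eq cz).
Qed.

Variable x1 : LS.
Hypothesis x0x1_direct : (x0 :&: x1 = 0)%VS.

Definition d3_entry x y := [&& (y + x0 == x + x0)%VS, (y :&: x0 == x :&: x0)%VS
                           & rank_tau_diff x0 x1 x y == 1%N].

Lemma d3_entryE x y : d3_entry x y =
  [&& covby x (x + y), covby y (x + y), (y + x0 == x + x0)%VS & (x :&: x0 <= y)%VS].
Proof.
rewrite /d3_entry rank_tau_diffE //.
case: (eqVneq (y + x0)%VS (x + x0)%VS) => [eW|_]; last by rewrite andFb !andbF.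
have sumE : (x + y + x0 = x + x0)%VS by rewrite -addvA eW addvA addvv.
have := dimv_sum_cap x x0; have := dimv_sum_cap y x0; have := dimv_sum_cap (x + y) x0.
rewrite eW sumE !covby_dimE ?addvSl ?addvSr //.
have -> : (x :&: x0 <= y)%VS = (x :&: x0 <= y :&: x0)%VS by rewrite subv_cap capvSr andbT.
have [sub | nsub] := boolP (x :&: x0 <= y :&: x0)%VS.
  by rewrite eq_sym eqv_dim //; do !case: eqP => /=; lia.
by case: eqP => [yx0E|_]; [case/negP: nsub; rewrite yx0E | rewrite andFb !andbF].
Qed.

Lemma d3_entry_diag x : d3_entry x x = false.
Proof. by rewrite d3_entryE addvv covby_dimE // addn1 eqn_leq ltnn. Qed.

Lemma updown_downup_offdiag x y : x != y -> updown x y = (downup x y + d3_entry x y)%N.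
Proof.
move=> neq_xy; rewrite updown_offdiag // downup_offdiag // d3_entryE.
by case: (covby x _); case: (covby y _); case: (_ == _); case: (_ <= _)%VS.
Qed.

End Adjacency.

Lemma natr_geom_count (R : pzRingType) (n m k : nat) : (0 < m)%N ->
  (n * (m - 1) = m ^ k - 1)%N -> n%:R * (m%:R - 1) = m%:R ^+ k - 1 :> R.
Proof.
move=> m_gt0 /(congr1 (fun i => i%:R : R)).
by rewrite natrM !natrB ?expn_gt0 ?m_gt0 // natrX.
Qed.

Section DiagonalEntries.
Variables (F : finFieldType) (D : nat).
Local Notation LS := {vspace 'rV[F]_D}.
Local Notation p := (#|F|%:R : algC).

Lemma qF_sqr : qF F ^+ 2 = p.
Proof. by rewrite /qF sqrtCK. Qed.

Lemma qF_neq0 : qF F != 0.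
Proof.
apply: contraTneq (card_F_gt0 F) => q0.
by rewrite lt0n negbK -(pnatr_eq0 algC) -qF_sqr q0 expr0n.
Qed.

Lemma cardvE (z : LS) : cardv z = p ^+ \dim z.
Proof. by rewrite /cardv exprM qF_sqr. Qed.

Variable x0 : LS.

Lemma qF_e1e2 x : qF F ^+ D = qF F ^ e1 x0 x * qF F ^ e2 x0 x * p ^+ \dim x.
Proof.
rewrite -qF_sqr -exprM !exprnP -!expfzDr ?qF_neq0 //; congr (_ ^ _).
have := dimv_sum_cap x x0; have := dimv_leD x0; have := dimvS (addvSr x x0).
rewrite /e1 /e2; lia.
Qed.

Lemma commutator_diag x :
  (qF F ^+ 2 - 1) * ((updown x0 x x)%:R - (downup x0 x x)%:R) =
  (cardv x + cardv x0) / cardv (x :&: x0) - 1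
    - qF F ^+ D * ((qF F ^ e2 x0 x)^-1 * (qF F ^ e1 x0 x)^-1).
Proof.
set n := \dim x; set d0 := \dim x0; set c := \dim (x :&: x0).
have c_le_n : (c <= n)%N by apply: dimvS; apply: capvSl.
have c_le_d0 : (c <= d0)%N by apply: dimvS; apply: capvSr.
have up_count : (updown x0 x x)%:R * (p - 1) = p ^+ (d0 - c) - 1.
  rewrite updown_diag; apply: natr_geom_count (card_F_gt0 F) _.
  have -> : (d0 - c = \dim (x + x0) - n)%N by have := dimv_sum_cap x x0; lia.
  exact: card_covby_sub (addvSl x x0).
have hyp_count : (#|[set z : LS | covby z x]|)%:R * (p - 1) = p ^+ n - 1.
  have -> : [set z : LS | covby z x] = [set z | covby z x && (0 <= z)%VS].
    by apply/setP => z; rewrite !inE sub0v andbT.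
  apply: natr_geom_count (card_F_gt0 F) _.
  by rewrite card_covby_sup ?sub0v // dimv0 subn0.
have hypc_count :
    (#|[set z : LS | covby z x && (x :&: x0 <= z)%VS]|)%:R * (p - 1) = p ^+ (n - c) - 1.
  exact/natr_geom_count/card_covby_sup/capvSl/(card_F_gt0 F).
have down_count : (downup x0 x x)%:R * (p - 1) = p ^+ n - p ^+ (n - c).
  have := congr1 (fun k => k%:R : algC) (downup_diag x0 x).
  by rewrite natrD => /(canRL (addrK _)) ->; rewrite mulrBl hyp_count hypc_count; ring.
have pc_neq0 : p ^+ c != 0 by rewrite expf_neq0 // pnatr_eq0 -lt0n (card_F_gt0 F).
have en : p ^+ n = p ^+ (n - c) * p ^+ c by rewrite -exprD subnK.
have ed0 : p ^+ d0 = p ^+ (d0 - c) * p ^+ c by rewrite -exprD subnK.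
rewrite qF_sqr mulrBr ![(p - 1) * _]mulrC up_count down_count !cardvE (qF_e1e2 x).
rewrite -/n -/d0 -/c en ed0.
have := expfz_neq0 (e1 x0 x) qF_neq0; have := expfz_neq0 (e2 x0 x) qF_neq0.
move: (qF F ^ e1 x0 x) (qF F ^ e2 x0 x) => u v v_neq0 u_neq0.
by field; rewrite pc_neq0 u_neq0 v_neq0.
Qed.

End DiagonalEntries.

Section Operators.
Variables (F : finFieldType) (D : nat).
Local Notation LS := {vspace 'rV[F]_D}.
Implicit Types (f : CL F D) (y : LS).

Lemma scale_regular (a b : algC^o) : a *: b = a * b.
Proof. by []. Qed.

Lemma linextE (T : LS -> CL F D) f y : linext T f y = \sum_x f x * T x y.
Proof. by rewrite /linext sum_ffunE; apply: eq_bigr => x _; rewrite ffunE. Qed.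

Lemma linext_bsumE (P : LS -> pred LS) f y :
  linext (fun x => bsum (P x)) f y = \sum_x f x * (P x y)%:R.
Proof. by rewrite linextE; under eq_bigr do rewrite ffunE. Qed.

Lemma linext_bsum_comp (P Q : LS -> pred LS) f y :
  linext (fun z => bsum (Q z)) (linext (fun x => bsum (P x)) f) y =
  \sum_x f x * #|[set z | P x z && Q z y]|%:R.
Proof.
rewrite linext_bsumE; under eq_bigr => z _ do rewrite linext_bsumE mulr_suml.
under [RHS]eq_bigr => x _ do rewrite -sum1dep_card natr_sum mulr_sumr big_mkcond.
rewrite [RHS]exchange_big; apply: eq_bigr => z _; apply: eq_bigr => x _ /=.
by rewrite -mulrA -natrM mulnb; case: (_ && _); rewrite ?mulr1 ?mulr0.
Qed.

Lemma linext_diagE (c : LS -> algC) f y :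
  linext (fun x => c x *: bvec x) f y = f y * c y.
Proof.
rewrite linextE (bigD1 y) //= big1 => [|x neq_xy]; rewrite !ffunE scale_regular.
  by rewrite eqxx mulr1 addr0.
by rewrite eq_sym (negbTE neq_xy) mulr0 mulr0.
Qed.

End Operators.

Section CommutatorEntries.
Variables (F : finFieldType) (D : nat) (x0 : {vspace 'rV[F]_D}).
Implicit Types (f : CL F D) (y : {vspace 'rV[F]_D}).

Lemma L2R2E f y : L2 x0 (R2 x0 f) y = \sum_x f x * (updown x0 x y)%:R.
Proof.
rewrite linext_bsum_comp; apply: eq_bigr => x _; congr (_ * _%:R).
by apply: eq_card => z; rewrite !inE /covby_mod [(z + x0 == _)%VS]eq_sym.
Qed.

Lemma R2L2E f y : R2 x0 (L2 x0 f) y = \sum_x f x * (downup x0 x y)%:R.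
Proof.
rewrite linext_bsum_comp; apply: eq_bigr => x _; congr (_ * _%:R).
by apply: eq_card => z; rewrite !inE /covby_mod [(y + x0 == _)%VS]eq_sym.
Qed.

End CommutatorEntries.

Theorem mainTheorem16 (F : finFieldType) (D : nat)
    (x0 x1 : {vspace 'rV[F]_D})
    (hdirect : (x0 :&: x1 = 0)%VS) (hfull : (x0 + x1 = fullv)%VS) :
  forall f : CL F D,
    (qF F ^+ 2 - 1) *: (L2 x0 (R2 x0 f) - R2 x0 (L2 x0 f)) =
    (qF F ^+ 2 - 1) *: D3 x0 x1 f + D4 x0 f
      - qF F ^+ D *: D1inv x0 (D2inv x0 f).
Proof.
move=> f; apply/ffunP => y; rewrite !ffunE !scale_regular L2R2E R2L2E.
rewrite [D3 _ _ _ _]linext_bsumE [D4 _ _ _]linext_diagE [D1inv _ _ _]linext_diagE.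
rewrite [D2inv _ _ _]linext_diagE.
have offdiag : \sum_x f x * ((updown x0 x y)%:R - (downup x0 x y)%:R) =
    f y * ((updown x0 y y)%:R - (downup x0 y y)%:R)
    + \sum_x f x * (d3_entry x0 x1 x y)%:R.
  rewrite (bigD1 y) //= [in RHS](bigD1 y) //= d3_entry_diag // mulr0 add0r; congr (_ + _).
  apply: eq_bigr => x neq_xy.
  by rewrite (updown_downup_offdiag hdirect) // natrD addrAC subrr add0r.
rewrite -sumrB; under eq_bigr do rewrite -mulrBr.
by rewrite offdiag mulrDr mulrCA commutator_diag; ring.
Qed.
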